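(* Let $\varphi:\mathfrak{h}\to V^*$ be a complex factorization structure and $j\in\{1,\ldots,m\}$. Then for every $\ell\in\mathbb{P}(V_j)$ (not only generic ones) there exists $T\in\hat V_j^*$ such that $\varphi(\psi_j(\ell))$ is spanned by $\alpha\otimes T$, where $\alpha$ spans $\ell^0\subset V_j^*$ and is placed in the $j$-th slot.
   Context: $V_1,\ldots,V_m$ are 2-dimensional complex vector spaces, $V^*=V_1^*\otimes\cdots\otimes V_m^*$, $\hat V_j^*=\bigotimes_{r\neq j}V_r^*$, $\ell^0$ is the annihilator of $\ell$. $\Sigma^0_{j,\ell}=V_1^*\otimes\cdots\otimes\ell^0\otimes\cdots\otimes V_m^*$ ($\ell^0$ in slot $j$). A factorization structure of dimension $m$ is an injective linear map $\varphi:\mathfrak{h}\to V^*$, $\dim\mathfrak{h}=m+1$, with $\dim(\varphi(\mathfrak{h})\cap\Sigma^0_{j,\ell})=1$ for all $j$ and all $\ell$ in a nonempty Zariski-open subset of $\mathbb{P}(V_j)$. The $j$-th factorization curve $\psi_j:\mathbb{P}(V_j)\to\mathbb{P}(\mathfrak{h})$ is the unique regular extension to all of $\mathbb{P}(V_j)\cong\mathbb{P}^1$ of the generically defined regular map $\ell\mapsto\varphi^{-1}(\varphi(\mathfrak{h})\cap\Sigma^0_{j,\ell})$. *)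

From HB Require Import structures.
From mathcomp Require Import all_boot all_order all_algebra.
From mathcomp Require Import reals complex.
Unset Implicit Arguments.
Set Warnings "-notation-overridden,-ambiguous-paths".
Import Order.TTheory GRing.Theory Num.Theory.
Local Open Scope ring_scope.

Section FactorizationStructures.
Variable C : fieldType.

(* Coordinates: V_r = C^2 (basis e_0,e_1), V_r^* with the dual basis.
   A vector of V_j (or a functional of V_j^* ) is a function 'I_2 -> C. *)
Definition vec n := 'I_n -> C.
Definition vzero n : vec n := fun _ => 0.
Definition vscale n (c : C) (x : vec n) : vec n := fun k => c * x k.

Definition proj_eq n (x y : vec n) := exists c : C, c != 0 /\ y = vscale n c x.

(* V^* = V_1^* (x) ... (x) V_m^* : functions on multi-indices 'I_m -> 'I_2. *)
Definition idx (m : nat) := {ffun 'I_m -> 'I_2}.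
Definition tensor (m : nat) := idx m -> C.
Definition tzero m : tensor m := fun _ => 0.

(* \hat V_j^* = (x)_{r <> j} V_r^* : functions on multi-indices omitting slot j. *)
Definition hidx (m : nat) (j : 'I_m) := {ffun {x : 'I_m | x != j} -> 'I_2}.
Definition htensor m (j : 'I_m) := hidx m j -> C.
Definition restr m (j : 'I_m) (i : idx m) : hidx m j := [ffun x => i (val x)].

(* alpha (x) T, with alpha : V_j^* placed in the j-th slot, T in \hat V_j^* *)
Definition tens_at m (j : 'I_m) (alpha : vec 2) (T : htensor m j) : tensor m :=
  fun i => alpha (i j) * T (restr m j i).

(* alpha belongs to the annihilator ell^0 of the line ell = [v] *)
Definition annih (v alpha : vec 2) := alpha ord0 * v ord0 + alpha ord_max * v ord_max = 0.

(* Sigma^0_{j,ell} = V_1^* (x) .. (x) ell^0 (x) .. (x) V_m^*  (ell = [v]).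
   Since ell^0 is one-dimensional, this subspace is exactly the set of the
   tensors alpha (x) T with alpha in ell^0 and T in \hat V_j^*. *)
Definition Sigma0 m (j : 'I_m) (v : vec 2) (t : tensor m) :=
  exists (alpha : vec 2) (T : htensor m j), annih v alpha /\ t = tens_at m j alpha T.

(* h = C^{m+1}; a linear map phi : h -> V^* is given by the images of the
   standard basis vectors of h. *)
Definition phimap m (phi : 'I_m.+1 -> tensor m) (x : vec m.+1) : tensor m :=
  fun i => \sum_(k < m.+1) x k * phi k i.

Definition phi_injective m (phi : 'I_m.+1 -> tensor m) :=
  forall x : vec m.+1, phimap m phi x = tzero m -> x = vzero m.+1.

Definition spans m (S : tensor m -> Prop) (t : tensor m) :=
  t <> tzero m /\ S t /\ forall s, S s -> exists c : C, s = (fun i => c * t i).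

Definition dim_one m (S : tensor m -> Prop) := exists t, spans m S t.

Definition image_cap_Sigma m (phi : 'I_m.+1 -> tensor m) (j : 'I_m) (v : vec 2)
  (t : tensor m) := (exists x, t = phimap m phi x) /\ Sigma0 m j v t.

(* Zariski topology on P(V_j) = P^1.  A homogeneous form of degree d in the
   coordinates (v_0, v_1) is \sum_{k<=d} c_k v_0^k v_1^(d-k). *)
Definition form := (nat * (nat -> C))%type.
Definition eval_form (f : form) (v : vec 2) : C :=
  \sum_(k < f.1.+1) f.2 k * v ord0 ^+ k * v ord_max ^+ (f.1 - k).

(* Subsets of P^1 are predicates on nonzero vectors of C^2 (only their values
   on nonzero vectors matter).  Zariski-closed: common zero locus of a set of
   homogeneous forms. *)
Definition zclosed (Z : vec 2 -> Prop) :=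
  exists F : form -> Prop, forall v, v <> vzero 2 ->
    (Z v <-> forall f, F f -> eval_form f v = 0).
Definition zopen (U : vec 2 -> Prop) := zclosed (fun v => ~ U v).
Definition pnonempty (U : vec 2 -> Prop) := exists v, v <> vzero 2 /\ U v.

Definition factorization_structure m (phi : 'I_m.+1 -> tensor m) :=
  phi_injective m phi /\
  forall j : 'I_m, exists U, zopen U /\ pnonempty U /\
    forall v, v <> vzero 2 -> U v -> dim_one m (image_cap_Sigma m phi j v).

(* A map P^1 = P(V_j) -> P(h) = P^m, represented on nonzero vectors. *)
Definition proj_map m (psi : vec 2 -> vec m.+1) :=
  (forall v, v <> vzero 2 -> psi v <> vzero m.+1) /\
  (forall v c, v <> vzero 2 -> c != 0 -> proj_eq m.+1 (psi v) (psi (vscale 2 c v))).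

Definition regular_map m (psi : vec 2 -> vec m.+1) :=
  proj_map m psi /\
  forall v, v <> vzero 2 -> exists (U : vec 2 -> Prop) (d : nat) (c : 'I_m.+1 -> nat -> C),
    zopen U /\ U v /\
    forall w, w <> vzero 2 -> U w ->
      let Fw : vec m.+1 := fun k => eval_form (d, c k) w in
      Fw <> vzero m.+1 /\ proj_eq m.+1 Fw (psi w).

(* psi is the j-th factorization curve: a regular map on all of P(V_j) which,
   on a nonempty Zariski-open set, sends ell = [v] to the point
   phi^{-1}(phi(h) cap Sigma^0_{j,ell}) of P(h). *)
Definition factorization_curve m (phi : 'I_m.+1 -> tensor m) (j : 'I_m)
    (psi : vec 2 -> vec m.+1) :=
  regular_map m psi /\
  exists U, zopen U /\ pnonempty U /\
    forall v, v <> vzero 2 -> U v ->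
      spans m (image_cap_Sigma m phi j v) (phimap m phi (psi v)).

End FactorizationStructures.

From HB Require Import structures.
From mathcomp Require Import all_boot all_order all_algebra.
From mathcomp Require Import reals complex.
From mathcomp Require Import ring.
From Stdlib Require Import Classical FunctionalExtensionality.
Import Order.TTheory GRing.Theory Num.Theory.
Local Open Scope ring_scope.
Set Warnings "-notation-overridden,-ambiguous-paths".
Set Implicit Arguments.
Unset Strict Implicit.

(* For a tensor t and a multi-index h of the slots other than j, the slice t_h
   is a vector of V_j^*.  A tensor lies in Sigma^0_{j,[v]} iff all its slices
   annihilate v, and it is then alpha (x) T for any alpha spanning [v]^0,
   because in dimension 2 all functionals annihilating v are proportional.  So
   it suffices that every slice of phi(psi(v)) annihilates v, which is known for
   generic v.  Near v, psi is given by forms F; along the line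
   w(t) = v + t (p - v) towards a generic point p, <phi(F(w(t)))_h, w(t)> is a
   polynomial in t vanishing off the roots of a nonzero polynomial (w(t) must be
   nonzero, generic and in the domain of F), hence identically, in particular
   at t = 0. *)

Section PolynomialFunctions.
Variable R : numDomainType.

Definition polyfun (g : R -> R) := exists p : {poly R}, forall t, g t = p.[t].

Lemma polyfun_cst a : polyfun (fun _ => a).
Proof. by exists a%:P => t; rewrite hornerC. Qed.

Lemma polyfun_affine a b : polyfun (fun t => a + t * b).
Proof. by exists (a%:P + 'X * b%:P) => t; rewrite !hornerE. Qed.

Lemma polyfun_add g1 g2 : polyfun g1 -> polyfun g2 -> polyfun (fun t => g1 t + g2 t).
Proof. by move=> [p1 E1] [p2 E2]; exists (p1 + p2) => t; rewrite hornerD E1 E2. Qed.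

Lemma polyfun_mul g1 g2 : polyfun g1 -> polyfun g2 -> polyfun (fun t => g1 t * g2 t).
Proof. by move=> [p1 E1] [p2 E2]; exists (p1 * p2) => t; rewrite hornerM E1 E2. Qed.

Lemma polyfun_exp g n : polyfun g -> polyfun (fun t => g t ^+ n).
Proof. by move=> [p E]; exists (p ^+ n) => t; rewrite horner_exp E. Qed.

Lemma polyfun_sum n (G : 'I_n -> R -> R) :
  (forall k, polyfun (G k)) -> polyfun (fun t => \sum_(k < n) G k t).
Proof.
elim: n G => [|n IHn] G polyG; first by exists 0 => t; rewrite big_ord0 horner0.
have [p Ep] := IHn (fun k => G (widen_ord (leqnSn n) k)) (fun k => polyG _).
have [q Eq] := polyG ord_max.
by exists (p + q) => t; rewrite big_ord_recr /= hornerD Ep Eq.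
Qed.

Lemma poly_eq0_of_horner (p : {poly R}) : (forall t, p.[t] = 0) -> p = 0.
Proof.
move=> p0; apply: (@roots_geq_poly_eq0 _ p [seq i%:R | i <- iota 0 (size p)]).
- by apply/allP => x _; apply/eqP/p0.
- by rewrite map_inj_uniq ?iota_uniq // => a b /eqP; rewrite eqr_nat => /eqP.
- by rewrite size_map size_iota.
Qed.

Lemma polyfun_eq0 g q : polyfun g -> polyfun q -> (exists a, q a != 0) ->
  (forall t, q t != 0 -> g t = 0) -> forall t, g t = 0.
Proof.
move=> [pg Eg] [pq Eq] [a qa] g_off_roots.
have pq_neq0 : pq != 0 by apply: contraNneq qa => pq0; rewrite Eq pq0 horner0.
have : pg * pq = 0.
  apply: poly_eq0_of_horner => t; rewrite hornerM -Eg -Eq.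
  by have [->|/g_off_roots ->] := eqVneq (q t) 0; rewrite ?mulr0 ?mul0r.
move/eqP; rewrite mulf_eq0 (negbTE pq_neq0) orbF => /eqP pg0 t.
by rewrite Eg pg0 horner0.
Qed.

Lemma polyfun_mul_neq0 g1 g2 : polyfun g1 -> polyfun g2 ->
  (exists a, g1 a != 0) -> (exists b, g2 b != 0) -> exists c, g1 c * g2 c != 0.
Proof.
move=> pg1 pg2 [a g1a] g2_neq0; apply: NNPP => /not_ex_all_not g12_0.
have g1_0 : forall t, g1 t = 0.
  apply: (polyfun_eq0 pg1 pg2 g2_neq0) => t g2t; apply/eqP.
  by apply: contra_notT (g12_0 t) => g1t; rewrite mulf_neq0.
by move/eqP: g1a; rewrite g1_0.
Qed.

End PolynomialFunctions.

Section TwoDimensionalDuality.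
Variable C : fieldType.

Lemma vec_neq0 n (x : vec C n) : x <> vzero C n -> exists k, x k != 0.
Proof.
move=> x_neq0; apply: NNPP => /not_ex_all_not x0; apply: x_neq0.
by apply: functional_extensionality => k; apply/eqP; apply: contra_notT (x0 k).
Qed.

Lemma ord2P (a : 'I_2) : a = ord0 \/ a = ord_max.
Proof. by case: a => [[|[|//]] ?]; [left | right]; apply: val_inj. Qed.

Lemma annih_vscale (v a : vec C 2) c :
  c != 0 -> annih C v (vscale C 2 c a) <-> annih C v a.
Proof.
rewrite /annih /vscale -!mulrA -mulrDr => c_neq0; split=> [/eqP|->]; last exact: mulr0.
by rewrite mulf_eq0 (negbTE c_neq0) => /eqP.
Qed.

Lemma annih_proportional (v a b : vec C 2) : v <> vzero C 2 ->
  annih C v a -> annih C v b -> forall k l, a k * b l = a l * b k.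
Proof.
move=> v_neq0 va vb.
have cross : a ord0 * b ord_max = a ord_max * b ord0.
  have [k vk] := vec_neq0 v_neq0.
  have : v k * (a ord0 * b ord_max - a ord_max * b ord0) = 0.
    case: (ord2P k) => ->.
    - transitivity (b ord_max * (a ord0 * v ord0 + a ord_max * v ord_max)
        - a ord_max * (b ord0 * v ord0 + b ord_max * v ord_max)); first by ring.
      by rewrite va vb; ring.
    - transitivity (a ord0 * (b ord0 * v ord0 + b ord_max * v ord_max)
        - b ord0 * (a ord0 * v ord0 + a ord_max * v ord_max)); first by ring.
      by rewrite va vb; ring.
  by move/eqP; rewrite mulf_eq0 (negbTE vk) subr_eq0 => /eqP.
by move=> k l; case: (ord2P k) => ->; case: (ord2P l) => ->.
Qed.

End TwoDimensionalDuality.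

Section Slices.
Variables (C : fieldType) (m : nat) (j : 'I_m).

Definition ins_slot (h : hidx m j) (a : 'I_2) : idx m :=
  [ffun x => odflt a (omap h (insub x))].

Lemma ins_slot_at h a : ins_slot h a j = a.
Proof. by rewrite ffunE insubF //= eqxx. Qed.

Lemma restr_ins_slot h a : restr m j (ins_slot h a) = h.
Proof. by apply/ffunP => x; rewrite !ffunE valK. Qed.

Lemma ins_slot_restr i : ins_slot (restr m j i) (i j) = i.
Proof.
apply/ffunP => x; rewrite ffunE.
have [->|x_neq_j] := eqVneq x j; first by rewrite insubF //= eqxx.
by rewrite insubT /= ffunE.
Qed.

Definition slice (t : tensor C m) (h : hidx m j) : vec C 2 :=
  fun a => t (ins_slot h a).

Lemma slice_scale c t h : slice (fun i => c * t i) h = vscale C 2 c (slice t h).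
Proof. by []. Qed.

Lemma Sigma0_annih_slice v t : Sigma0 C m j v t -> forall h, annih C v (slice t h).
Proof.
move=> [alpha [T [v_alpha ->]]] h.
rewrite /annih /slice /tens_at !ins_slot_at !restr_ins_slot.
by rewrite -!mulrA ![T h * _]mulrC !mulrA -mulrDl v_alpha mul0r.
Qed.

Lemma annih_slice_tens_at v alpha t : v <> vzero C 2 -> alpha <> vzero C 2 ->
  annih C v alpha -> (forall h, annih C v (slice t h)) ->
  exists T, t = tens_at C m j alpha T.
Proof.
move=> v_neq0 alpha_neq0 v_alpha v_slice.
have [b alpha_b] := vec_neq0 alpha_neq0.
exists (fun h => t (ins_slot h b) / alpha b).
apply: functional_extensionality => i; rewrite /tens_at.
have := annih_proportional v_neq0 v_alpha (v_slice (restr m j i)) (i j) b.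
rewrite /slice ins_slot_restr mulrA => ->.
by rewrite mulrAC divff // mul1r.
Qed.

End Slices.

Section FactorizationCurves.
Variables (C : numFieldType) (m : nat).
Implicit Types (phi : 'I_m.+1 -> tensor C m) (v w : vec C 2).

Lemma polyfun_eval_form_line f (a b : vec C 2) :
  polyfun (fun t => eval_form C f (fun k => a k + t * b k)).
Proof.
apply: polyfun_sum => k; apply: polyfun_mul; last exact/polyfun_exp/polyfun_affine.
exact/polyfun_mul/polyfun_exp/polyfun_affine/polyfun_cst.
Qed.

Lemma polyfun_phimap phi (x : C -> vec C m.+1) i :
  (forall k, polyfun (fun t => x t k)) -> polyfun (fun t => phimap C m phi (x t) i).
Proof. by move=> x_poly; apply: polyfun_sum => k; apply/polyfun_mul/polyfun_cst. Qed.

Lemma phimap_vscale phi c x :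
  phimap C m phi (vscale C m.+1 c x) = (fun i => c * phimap C m phi x i).
Proof.
apply: functional_extensionality => i.
by rewrite /phimap mulr_sumr; apply: eq_bigr => k _; rewrite mulrA.
Qed.

Lemma zopen_basic_nbhs (U : vec C 2 -> Prop) p : zopen C U -> p <> vzero C 2 -> U p ->
  exists f, eval_form C f p != 0 /\
    forall w, w <> vzero C 2 -> eval_form C f w != 0 -> U w.
Proof.
move=> [F U_zeros] p_neq0 Up.
have : ~ (forall f, F f -> eval_form C f p = 0).
  by move=> /(proj2 (U_zeros p p_neq0)).
move=> /not_all_ex_not [f not_Ff_imp].
have [Ff fp_neq0] := imply_to_and _ _ not_Ff_imp.
exists f; split=> [|w w_neq0 fw_neq0]; first exact/eqP.
apply: NNPP => /(proj1 (U_zeros w w_neq0)) /(_ f Ff).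
exact/eqP.
Qed.

Lemma factorization_curve_annih_slice phi j psi :
  factorization_curve C m phi j psi ->
  forall v, v <> vzero C 2 ->
  forall h : hidx m j, annih C v (slice (phimap C m phi (psi v)) h).
Proof.
move=> [[_ psi_local] [U0 [U0_open [[p [p_neq0 U0p]] psi_generic]]]] v v_neq0 h.
have [U1 [d [c [U1_open [U1v psi_forms]]]]] := psi_local v v_neq0.
pose F w : vec C m.+1 := fun k => eval_form C (d, c k) w.
have phi_psi_F w : w <> vzero C 2 -> U1 w -> exists2 l, l != 0 &
    phimap C m phi (psi w) = (fun i => l * phimap C m phi (F w) i).
  by move=> w_neq0 U1w; have [_ [l [l_neq0 ->]]] := psi_forms w w_neq0 U1w;
    exists l; last exact: phimap_vscale.
suff annih_F : annih C v (slice (phimap C m phi (F v)) h).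
  have [l l_neq0 ->] := phi_psi_F v v_neq0 U1v.
  by rewrite slice_scale; apply/(annih_vscale _ _ l_neq0).
pose w t : vec C 2 := fun k => v k + t * (p k - v k).
pose g t := let a := slice (phimap C m phi (F (w t))) h in
  a ord0 * w t ord0 + a ord_max * w t ord_max.
have [f0 [f0p U0_f0]] := zopen_basic_nbhs U0_open p_neq0 U0p.
have [f1 [f1v U1_f1]] := zopen_basic_nbhs U1_open v_neq0 U1v.
have [k vk] := vec_neq0 v_neq0.
pose q t := eval_form C f0 (w t) * eval_form C f1 (w t) * w t k.
have w0 : w 0 = v by apply: functional_extensionality => i; rewrite /w mul0r addr0.
have w1 : w 1 = p by apply: functional_extensionality => i; rewrite /w mul1r addrC subrK.
have g_poly : polyfun g.
  by apply: polyfun_add; apply: polyfun_mul; rewrite ?/w;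
    do ?[exact: polyfun_affine | apply: polyfun_phimap => i; exact: polyfun_eval_form_line].
have q_poly : polyfun q.
  by apply: polyfun_mul; [apply: polyfun_mul|]; rewrite ?/w;
    do ?[exact: polyfun_affine | exact: polyfun_eval_form_line].
have q_neq0 : exists t, q t != 0.
  apply: polyfun_mul_neq0; [|exact: polyfun_affine| |by exists 0; rewrite w0].
    by apply: polyfun_mul; exact: polyfun_eval_form_line.
  by apply: polyfun_mul_neq0; try exact: polyfun_eval_form_line;
    [exists 1; rewrite w1 | exists 0; rewrite w0].
have g_off_roots t : q t != 0 -> g t = 0.
  rewrite !mulf_eq0 !negb_or => /andP[/andP[f0w f1w] wk].
  have w_neq0 : w t <> vzero C 2 by move=> wt0; move: wk; rewrite wt0 eqxx.
  have [_ [[_ Sigma0_wt] _]] := psi_generic _ w_neq0 (U0_f0 _ w_neq0 f0w).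
  have [l l_neq0 phi_psi_wt] := phi_psi_F _ w_neq0 (U1_f1 _ w_neq0 f1w).
  move: (Sigma0_annih_slice Sigma0_wt h).
  by rewrite phi_psi_wt slice_scale => /(proj1 (annih_vscale _ _ l_neq0)).
by have := polyfun_eq0 g_poly q_poly q_neq0 g_off_roots 0; rewrite /g w0.
Qed.

End FactorizationCurves.

Unset Implicit Arguments.

Theorem proposition2p6 (R : realType) (m : nat)
  (phi : 'I_m.+1 -> tensor (complex R) m)
  (Hphi : factorization_structure (complex R) m phi)
  (j : 'I_m) (psi : vec (complex R) 2 -> vec (complex R) m.+1)
  (Hpsi : factorization_curve (complex R) m phi j psi) :
  forall v : vec (complex R) 2, v <> vzero (complex R) 2 ->
  forall alpha : vec (complex R) 2,
    alpha <> vzero (complex R) 2 -> annih (complex R) v alpha ->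
    exists T : htensor (complex R) m j,
      tens_at (complex R) m j alpha T <> tzero (complex R) m /\
      exists c : complex R,
        phimap (complex R) m phi (psi v) = (fun i => c * tens_at (complex R) m j alpha T i).
Proof.
move=> v v_neq0 alpha alpha_neq0 v_alpha.
have [T phi_psi_v] := annih_slice_tens_at v_neq0 alpha_neq0 v_alpha
  (factorization_curve_annih_slice Hpsi v_neq0).
exists T; split; last first.
  by exists 1; rewrite -phi_psi_v; apply: functional_extensionality => i; rewrite mul1r.
have [[[psi_neq0 _] _] _] := Hpsi.
by rewrite -phi_psi_v => /(proj1 Hphi (psi v)); apply: psi_neq0.
Qed.
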